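(* Let $\alpha>2$ with $\alpha\notin\mathbb N$ and $\lfloor\alpha\rfloor=2m$ for some $m\in\mathbb N$, and let $k\in\mathbb N$. With \[ L(\lambda)=2\sum_{j=1}^m\Big(1+2\lambda\cos\frac{2j\pi}{\alpha}+\lambda^2\Big)^{\alpha k/2}+(1-\alpha)(1+\lambda)^{\alpha k}-\frac{\alpha\sin(\alpha\pi)}{\pi}\int_0^{1/\lambda}\frac{s^{\alpha-1}(1-\lambda s)^{\alpha k}}{s^{2\alpha}-2s^\alpha\cos(\alpha\pi)+1}\,ds, \] there exists $\lambda_0>0$ such that $L(\lambda)<0$ for all $\lambda\in(0,\lambda_0)$. *)

From Stdlib Require Import Reals.
From Coquelicot Require Import Coquelicot.
Open Scope R_scope.

(* Real power x^y for x > 0; extended by 0 for x <= 0 (only matters at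
   isolated points such as s = 0 or s = 1/lambda, irrelevant for integrals). *)
Definition rpow (x y : R) : R := if Rlt_dec 0 x then Rpower x y else 0.

Definition L_fun (alpha : R) (m k : nat) (lam : R) : R :=
  2 * sum_n_m (fun j : nat =>
        rpow (1 + 2 * lam * cos (2 * INR j * PI / alpha) + lam ^ 2)
             (alpha * INR k / 2)) 1 m
  + (1 - alpha) * rpow (1 + lam) (alpha * INR k)
  - alpha * sin (alpha * PI) / PI *
      RInt (fun s => rpow s (alpha - 1) * rpow (1 - lam * s) (alpha * INR k)
                     / (rpow s (2 * alpha) - 2 * rpow s alpha * cos (alpha * PI) + 1))
           0 (1 / lam).

From Stdlib Require Import Reals Lra Lia.
From Coquelicot Require Import Coquelicot.
Open Scope R_scope.

(* Expand [L] to first order in [lam]: the powers by [(1 + x)^q ~ 1 + q x], the factor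
   [(1 - lam s)^(alpha k)] of the integrand by Bernoulli's inequality, and the two remaining
   integrals exactly, through the primitive [atan ((s^alpha - cos (alpha PI)) / sin (alpha PI))]
   of [s^(alpha-1) / (s^(2 alpha) - 2 s^alpha cos (alpha PI) + 1)].  Because
   [atan (cot (alpha PI)) = PI (2m + 1 - alpha) - PI/2], the constant terms cancel, and the
   coefficient of [lam] is at most [- alpha k / 3] since [cos (2 m PI / alpha)] is close to [-1];
   hence [L lam <= - alpha k lam / 3 + C lam^2] for small [lam]. *)

Lemma rpow_pos x p : 0 < x -> rpow x p = Rpower x p.
Proof. intros Hx; unfold rpow; destruct (Rlt_dec 0 x); [reflexivity | lra]. Qed.

Lemma rpow_nonpos x p : x <= 0 -> rpow x p = 0.
Proof. intros Hx; unfold rpow; destruct (Rlt_dec 0 x); [lra | reflexivity]. Qed.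

Lemma rpow_ge_0 x p : 0 <= rpow x p.
Proof. unfold rpow; destruct (Rlt_dec 0 x); [left; apply exp_pos | lra]. Qed.

Lemma rpow_1_l p : rpow 1 p = 1.
Proof. rewrite rpow_pos by lra; unfold Rpower; rewrite ln_1, Rmult_0_r; apply exp_0. Qed.

Lemma rpow_mult_2 a x : rpow x (2 * a) = rpow x a * rpow x a.
Proof.
  destruct (Rlt_dec 0 x).
  - rewrite !rpow_pos by auto. replace (2 * a) with (a + a) by ring. apply Rpower_plus.
  - rewrite !rpow_nonpos by lra. ring.
Qed.

Lemma rpow_pred_mul a x : 0 < x -> x * rpow x (a - 1) = rpow x a.
Proof.
  intros Hx. rewrite !rpow_pos by auto.
  replace a with ((a - 1) + 1) at 2 by ring. rewrite Rpower_plus, Rpower_1 by auto. ring.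
Qed.

(* [2^(a-2) >= 1 + (a-2) ln 2] and [ln 2 > 1/2]. *)
Lemma rpow_ge_sqr_mul_half a x : 2 < a -> 2 <= x -> x ^ 2 * (a / 2) <= rpow x a.
Proof.
  intros Ha Hx. rewrite rpow_pos by lra.
  replace a with (INR 2 + (a - 2)) at 2 by (simpl; ring).
  rewrite Rpower_plus, Rpower_pow by lra.
  apply Rmult_le_compat_l; [apply pow_le; lra |].
  apply Rle_trans with (Rpower 2 (a - 2)).
  - unfold Rpower. eapply Rle_trans; [| apply exp_ineq1_le].
    assert (H := ln_lt_2). nra.
  - apply Rle_Rpower_l; lra.
Qed.

Lemma is_derive_rpow_0 p : 1 < p -> is_derive (fun y => rpow y p) 0 0.
Proof.
  intros Hp. apply is_derive_Reals. intros eps Heps.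
  assert (Hdelta : 0 < Rpower eps (/ (p - 1))) by apply exp_pos.
  exists (mkposreal _ Hdelta). simpl. intros h Hh0 Hh.
  rewrite Rplus_0_l, (rpow_nonpos 0) by lra.
  destruct (Rlt_dec 0 h) as [Hpos | Hneg].
  - rewrite rpow_pos by lra.
    replace ((Rpower h p - 0) / h - 0) with (Rpower h (p - 1)).
    2:{ replace p with ((p - 1) + 1) at 2 by ring.
        rewrite Rpower_plus, Rpower_1 by lra. field; lra. }
    rewrite Rabs_right by (left; apply exp_pos).
    rewrite Rabs_right in Hh by lra.
    replace eps with (Rpower (Rpower eps (/ (p - 1))) (p - 1)).
    2:{ rewrite Rpower_mult, Rinv_l, Rpower_1 by lra. reflexivity. }
    apply Rlt_Rpower_l; lra.
  - rewrite rpow_nonpos by lra.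
    replace ((0 - 0) / h - 0) with 0 by (field; exact Hh0). rewrite Rabs_R0. exact Heps.
Qed.

Lemma is_derive_rpow p x : 1 < p -> is_derive (fun y => rpow y p) x (p * rpow x (p - 1)).
Proof.
  intros Hp. destruct (Rtotal_order x 0) as [Hneg | [-> | Hpos]].
  - rewrite (rpow_nonpos x), Rmult_0_r by lra.
    apply is_derive_ext_loc with (fun _ => 0); [| apply (is_derive_const (0 : R))].
    exists (mkposreal (- x) ltac:(lra)). intros y Hy.
    apply Rabs_lt_between' in Hy. simpl in Hy. rewrite rpow_nonpos; [reflexivity | lra].
  - rewrite (rpow_nonpos 0), Rmult_0_r by lra. apply is_derive_rpow_0; exact Hp.
  - apply is_derive_ext_loc with (fun y => Rpower y p).
    + exists (mkposreal x Hpos). intros y Hy.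
      apply Rabs_lt_between' in Hy. simpl in Hy. rewrite rpow_pos; [reflexivity | lra].
    + rewrite rpow_pos by lra. apply is_derive_Reals, derivable_pt_lim_power; exact Hpos.
Qed.

Lemma continuous_rpow p x : 1 < p -> continuous (fun y => rpow y p) x.
Proof.
  intros Hp. apply (ex_derive_continuous (K := R_AbsRing) (V := R_NormedModule)).
  eexists; apply is_derive_rpow; exact Hp.
Qed.

Lemma MVT_le f df a b M : a <= b ->
  (forall x, a <= x <= b -> is_derive f x (df x)) ->
  (forall x, a <= x <= b -> df x <= M) -> f b - f a <= M * (b - a).
Proof.
  intros Hab Hd HM.
  destruct (MVT_gen f a b df) as [c [Hc ->]];
    rewrite ?Rmin_left, ?Rmax_right in * by lra.
  - intros x Hx. apply Hd; lra.
  - intros x Hx. apply continuity_pt_filterlim.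
    apply (ex_derive_continuous (K := R_AbsRing) (V := R_NormedModule)).
    eexists; apply Hd; lra.
  - apply Rmult_le_compat_r; [lra | apply HM; lra].
Qed.

Lemma atan_le_id x : 0 <= x -> atan x <= x.
Proof.
  intros Hx. rewrite <- (Rminus_0_r (atan x)), <- atan_0.
  replace x with (1 * (x - 0)) at 2 by ring.
  apply MVT_le with (df := fun y => / (1 + y²)); [exact Hx | intros y _; apply is_derive_atan |].
  intros y _. rewrite <- Rinv_1. apply Rinv_le_contravar; [lra |].
  assert (0 <= y²) by apply Rle_0_sqr. lra.
Qed.

Lemma atan_ge_PI2_sub_inv y : 0 < y -> PI / 2 - / y <= atan y.
Proof.
  intros Hy. assert (Hinv : 0 < / y) by (apply Rinv_0_lt_compat; exact Hy).
  assert (Hat := atan_inv y Hy). assert (atan (/ y) <= / y) by (apply atan_le_id; lra).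
  lra.
Qed.

Lemma PI_le_10_3 : PI <= 10 / 3.
Proof.
  assert (atan (/ 2) <= / 2) by (apply atan_le_id; lra).
  assert (atan (/ 3) <= / 3) by (apply atan_le_id; lra).
  assert (HMachin := Machin_2_3). lra.
Qed.

Lemma cos_ge_1_sub_sqr_half t : - PI / 2 <= t <= PI / 2 -> 1 - t ^ 2 / 2 <= cos t.
Proof.
  intros Ht. destruct (cos_bound t 0 (proj1 Ht) (proj2 Ht)) as [H _].
  unfold cos_approx, cos_term in H. simpl in H. lra.
Qed.

(* From [exp (-y) >= 1 - y], i.e. [exp y <= 1 / (1 - y)]. *)
Lemma exp_le_quadratic y : Rabs y <= / 2 -> exp y <= 1 + y + 2 * y ^ 2.
Proof.
  intros Hy. apply Rabs_le_between in Hy.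
  assert (H := exp_ineq1_le (- y)). rewrite exp_Ropp in H.
  assert (He := exp_pos y).
  assert (exp y * (1 - y) <= 1).
  { apply Rmult_le_reg_r with (/ exp y); [apply Rinv_0_lt_compat; exact He |].
    rewrite Rmult_comm, <- Rmult_assoc, Rinv_l, Rmult_1_l by lra. lra. }
  nra.
Qed.

Lemma rpow_1_plus_le q x : 0 <= q -> Rabs x <= / 2 -> Rabs (q * x) <= / 2 ->
  rpow (1 + x) q <= 1 + q * x + 2 * (q * x) ^ 2.
Proof.
  intros Hq Hx Hqx. apply Rabs_le_between in Hx.
  rewrite rpow_pos by lra. unfold Rpower.
  apply Rle_trans with (exp (q * x)); [| apply exp_le_quadratic; exact Hqx].
  assert (Hln : ln (1 + x) <= x).
  { assert (H := exp_ineq1_le (ln (1 + x))). rewrite exp_ln in H by lra. lra. }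
  destruct (Rmult_le_compat_l q _ _ Hq Hln) as [Hlt | ->]; [left; apply exp_increasing, Hlt | lra].
Qed.

Lemma rpow_1_plus_ge p x : 0 <= p -> 0 <= x -> 1 + p * x - p * x ^ 2 <= rpow (1 + x) p.
Proof.
  intros Hp Hx. rewrite rpow_pos by lra. unfold Rpower.
  eapply Rle_trans; [| apply exp_ineq1_le].
  assert (Hln : x - x ^ 2 <= ln (1 + x)).
  { assert (H := exp_ineq1_le (- ln (1 + x))).
    rewrite exp_Ropp, exp_ln in H by lra.
    assert (x - x ^ 2 <= 1 - / (1 + x)).
    { replace (1 - / (1 + x)) with (x / (1 + x)) by (field; lra).
      apply Rmult_le_reg_r with (1 + x); [lra |].
      unfold Rdiv; rewrite Rmult_assoc, Rinv_l, Rmult_1_r by lra. nra. }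
    lra. }
  nra.
Qed.

Lemma rpow_1_minus_ge p y : 1 < p -> 0 <= y <= 1 -> 1 - p * y <= rpow (1 - y) p.
Proof.
  intros Hp Hy.
  assert (H := MVT_le (fun z => rpow z p) (fun z => p * rpow z (p - 1)) (1 - y) 1 p
                 ltac:(lra) (fun z _ => is_derive_rpow p z Hp)).
  cbv beta in H. rewrite rpow_1_l in H.
  enough (1 - rpow (1 - y) p <= p * (1 - (1 - y))) by lra.
  apply H. intros z Hz. enough (rpow z (p - 1) <= 1) by nra.
  destruct (Rlt_dec 0 z).
  - rewrite <- (rpow_1_l (p - 1)) at 2. rewrite !rpow_pos by lra. apply Rle_Rpower_l; lra.
  - rewrite rpow_nonpos by lra; lra.
Qed.

(* Coquelicot's generic lemmas, restated with the real operations so that [apply] and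
   [rewrite] match them syntactically. *)
Lemma continuous_Rplus (f g : R -> R) x :
  continuous f x -> continuous g x -> continuous (fun y => f y + g y) x.
Proof. apply (continuous_plus f g). Qed.

Lemma continuous_Rminus (f g : R -> R) x :
  continuous f x -> continuous g x -> continuous (fun y => f y - g y) x.
Proof. apply (continuous_minus f g). Qed.

Lemma continuous_Rmult (f g : R -> R) x :
  continuous f x -> continuous g x -> continuous (fun y => f y * g y) x.
Proof. apply (continuous_mult f g). Qed.

Lemma continuous_Rdiv (f g : R -> R) x :
  continuous f x -> continuous g x -> g x <> 0 -> continuous (fun y => f y / g y) x.
Proof.
  intros Hf Hg Hgx. apply continuous_Rmult; [exact Hf |].
  apply continuous_Rinv_comp; assumption.
Qed.

Lemma RInt_Rscal (f : R -> R) k u v : ex_RInt f u v ->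
  RInt (fun x => k * f x) u v = k * RInt f u v.
Proof. apply (RInt_scal (V := R_CompleteNormedModule)). Qed.

Lemma RInt_Rminus (f g : R -> R) u v : ex_RInt f u v -> ex_RInt g u v ->
  RInt (fun x => f x - g x) u v = RInt f u v - RInt g u v.
Proof. apply (RInt_minus (V := R_CompleteNormedModule)). Qed.

Definition den (a c x : R) : R := rpow x (2 * a) - 2 * rpow x a * c + 1.
Definition weight (a c x : R) : R := rpow x (a - 1) / den a c x.

Section Weight.

Variables a c : R.
Hypothesis Ha : 2 < a.
Hypothesis Hc : c ^ 2 < 1.

Lemma den_pos x : 0 < den a c x.
Proof.
  unfold den. rewrite rpow_mult_2.
  assert (H := pow2_ge_0 (rpow x a - c)). nra.
Qed.

Lemma continuous_den x : continuous (den a c) x.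
Proof.
  unfold den. apply continuous_Rplus; [| apply continuous_const].
  apply continuous_Rminus; [apply continuous_rpow; lra |].
  apply continuous_Rmult; [| apply continuous_const].
  apply continuous_Rmult; [apply continuous_const | apply continuous_rpow; lra].
Qed.

Lemma continuous_weight x : continuous (weight a c) x.
Proof.
  apply continuous_Rdiv; [apply continuous_rpow; lra | apply continuous_den |].
  apply Rgt_not_eq, den_pos.
Qed.

Lemma continuous_id_weight x : continuous (fun y => y * weight a c y) x.
Proof. apply continuous_Rmult; [apply continuous_id | apply continuous_weight]. Qed.

Lemma weight_ge_0 x : 0 <= weight a c x.
Proof.
  apply Rmult_le_pos; [apply rpow_ge_0 |].
  left; apply Rinv_0_lt_compat, den_pos.
Qed.

Lemma ex_RInt_weight u v : ex_RInt (weight a c) u v.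
Proof.
  apply (ex_RInt_continuous (V := R_CompleteNormedModule)); intros; apply continuous_weight.
Qed.

Lemma ex_RInt_id_weight u v : ex_RInt (fun y => y * weight a c y) u v.
Proof.
  apply (ex_RInt_continuous (V := R_CompleteNormedModule)); intros; apply continuous_id_weight.
Qed.

(* For [x >= 2], [u := x^a] satisfies [u >= x^2 a/2 >= 4], hence [den >= 9 u^2 / 16]. *)
Lemma id_weight_le_inv_sqr x : 2 <= x -> x * weight a c x <= 32 / (9 * a) / (x * x).
Proof.
  intros Hx.
  assert (Hu := rpow_ge_sqr_mul_half a x Ha Hx).
  assert (HD := den_pos x).
  unfold weight. replace (x * (rpow x (a - 1) / den a c x)) with (rpow x a / den a c x)
    by (rewrite <- (rpow_pred_mul a x) by lra; field; lra).
  unfold den in *. rewrite rpow_mult_2 in *. set (u := rpow x a) in *.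
  assert (Hc1 : c <= 1) by nra.
  assert (Hu4 : 4 <= u) by nra.
  assert (HD2 : 9 / 16 * (u * u) <= u * u - 2 * u * c + 1) by nra.
  apply Rmult_le_reg_r with ((u * u - 2 * u * c + 1) * (x * x)); [nra |].
  replace (u / (u * u - 2 * u * c + 1) * ((u * u - 2 * u * c + 1) * (x * x)))
    with (u * (x * x)) by (field; lra).
  replace (32 / (9 * a) / (x * x) * ((u * u - 2 * u * c + 1) * (x * x)))
    with (32 / (9 * a) * (u * u - 2 * u * c + 1)) by (field; split; lra).
  apply Rle_trans with (32 / (9 * a) * (9 / 16 * (u * u))).
  - replace (32 / (9 * a) * (9 / 16 * (u * u))) with (2 * u * u / a) by (field; lra).
    apply Rmult_le_reg_r with a; [lra |].
    replace (2 * u * u / a * a) with (2 * u * u) by (field; lra). nra.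
  - apply Rmult_le_compat_l; [apply Rlt_le, Rdiv_lt_0_compat; lra | lra].
Qed.

Lemma RInt_id_weight_tail_le X : 2 <= X -> RInt (fun x => x * weight a c x) 2 X <= 16 / (9 * a).
Proof.
  intros HX. set (K := 32 / (9 * a)).
  assert (HK : 0 < K) by (unfold K; apply Rdiv_lt_0_compat; lra).
  assert (Hcont : forall x, 2 <= x -> continuous (fun y => K / (y * y)) x).
  { intros x Hx. apply continuous_Rdiv; [apply continuous_const | | nra].
    apply continuous_Rmult; apply continuous_id. }
  assert (Hprim : is_RInt (fun x => K / (x * x)) 2 X (K / 2 - K / X)).
  { replace (K / 2 - K / X) with (minus ((fun y => - K / y) X) ((fun y => - K / y) 2))
      by (unfold minus, plus, opp; simpl; field; lra).
    apply (is_RInt_derive (fun y => - K / y)); rewrite Rmin_left, Rmax_right by lra.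
    - intros x Hx. auto_derive; [lra | field; lra].
    - intros x Hx. apply Hcont; lra. }
  apply Rle_trans with (RInt (fun x => K / (x * x)) 2 X).
  - apply RInt_le; [exact HX | apply ex_RInt_id_weight | eexists; exact Hprim |].
    intros x Hx. apply id_weight_le_inv_sqr; lra.
  - rewrite (is_RInt_unique _ _ _ _ Hprim).
    assert (0 <= K / X) by (apply Rlt_le, Rdiv_lt_0_compat; lra).
    replace (16 / (9 * a)) with (K / 2) by (unfold K; field; lra). lra.
Qed.

Lemma RInt_integrand_ge p lam : 1 < p -> 0 < lam ->
  RInt (weight a c) 0 (1 / lam) - p * lam * RInt (fun x => x * weight a c x) 0 (1 / lam) <=
  RInt (fun t => rpow t (a - 1) * rpow (1 - lam * t) p
                 / (rpow t (2 * a) - 2 * rpow t a * c + 1)) 0 (1 / lam).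
Proof.
  intros Hp Hlam.
  assert (HX : 0 < 1 / lam) by (apply Rdiv_lt_0_compat; lra).
  rewrite <- RInt_Rscal, <- RInt_Rminus by
    first [ apply ex_RInt_weight | apply ex_RInt_id_weight
          | apply (ex_RInt_scal (V := R_CompleteNormedModule)), ex_RInt_id_weight ].
  apply RInt_le; [lra | | |].
  - apply (ex_RInt_continuous (V := R_CompleteNormedModule)). intros z _.
    apply continuous_Rminus; [apply continuous_weight |].
    apply continuous_Rmult; [apply continuous_const | apply continuous_id_weight].
  - apply (ex_RInt_continuous (V := R_CompleteNormedModule)). intros z _.
    apply continuous_Rdiv; [| apply continuous_den | apply Rgt_not_eq, den_pos].
    apply continuous_Rmult; [apply continuous_rpow; lra |].
    apply (continuous_comp (fun t => 1 - lam * t) (fun y => rpow y p));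
      [| apply continuous_rpow; exact Hp].
    apply continuous_Rminus; [apply continuous_const |].
    apply continuous_Rmult; [apply continuous_const | apply continuous_id].
  - intros x Hx.
    assert (Hy : 0 <= lam * x <= 1).
    { split; [nra |]. unfold Rdiv in Hx. rewrite Rmult_1_l in Hx.
      apply Rmult_le_reg_r with (/ lam); [apply Rinv_0_lt_compat; exact Hlam |].
      rewrite Rmult_comm, <- Rmult_assoc, Rinv_l, Rmult_1_l by lra. lra. }
    assert (Hb := rpow_1_minus_ge p (lam * x) Hp Hy).
    assert (Hw := weight_ge_0 x).
    change (rpow x (2 * a) - 2 * rpow x a * c + 1) with (den a c x).
    replace (rpow x (a - 1) * rpow (1 - lam * x) p / den a c x)
      with (weight a c x * rpow (1 - lam * x) p)
      by (unfold weight; field; apply Rgt_not_eq, den_pos).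
    replace (weight a c x - p * lam * (x * weight a c x))
      with (weight a c x * (1 - p * (lam * x))) by ring.
    apply Rmult_le_compat_l; assumption.
Qed.

End Weight.

(* A primitive of [weight a c] is [atan ((x^a - c) / s) / (a s)],
   since [den = s^2 + (x^a - c)^2]. *)
Lemma RInt_weight a c s X : 2 < a -> 0 < s -> s ^ 2 + c ^ 2 = 1 -> 0 <= X ->
  RInt (weight a c) 0 X = (atan ((rpow X a - c) / s) + atan (c / s)) / (a * s).
Proof.
  intros Ha Hs Hsc HX. assert (Hc : c ^ 2 < 1) by nra.
  set (G := fun u => atan ((u - c) / s) / (a * s)).
  assert (HG : forall u, is_derive G u (/ (a * s) * (/ s * / (1 + ((u - c) / s) ^ 2)))).
  { intros u. unfold G. auto_derive; [exact I |].
    assert (H := pow2_ge_0 (u - c)). field. repeat split; nra. }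
  assert (HF : forall x, is_derive (fun y => G (rpow y a)) x (weight a c x)).
  { intros x.
    replace (weight a c x)
      with (scal (a * rpow x (a - 1)) (/ (a * s) * (/ s * / (1 + ((rpow x a - c) / s) ^ 2)))).
    { apply (is_derive_comp G (fun y => rpow y a)); [apply HG | apply is_derive_rpow; lra]. }
    unfold scal; simpl; unfold mult; simpl.
    assert (Hd := den_pos a c Hc x).
    unfold weight, den in *. rewrite rpow_mult_2 in *. set (u := rpow x a) in *.
    assert (E : u * u - 2 * u * c + 1 = s ^ 2 + (u - c) ^ 2) by lra.
    rewrite E in *. field. split; lra. }
  apply is_RInt_unique.
  replace ((atan ((rpow X a - c) / s) + atan (c / s)) / (a * s))
    with (minus (G (rpow X a)) (G (rpow 0 a))).
  - apply (is_RInt_derive (fun y => G (rpow y a))); intros x _;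
      [apply HF | apply continuous_weight; lra].
  - unfold minus, plus, opp; simpl. unfold G. rewrite (rpow_nonpos 0) by lra.
    replace ((0 - c) / s) with (- (c / s)) by (field; lra). rewrite atan_opp. field. lra.
Qed.

Lemma RInt_id_weight_le a c s X : 2 < a -> 0 < s -> s ^ 2 + c ^ 2 = 1 -> 2 <= X ->
  RInt (fun x => x * weight a c x) 0 X <= 2 * ((PI / 2 + atan (c / s)) / (a * s)) + 16 / (9 * a).
Proof.
  intros Ha Hs Hsc HX. assert (Hc : c ^ 2 < 1) by nra.
  rewrite <- (RInt_Chasles (V := R_CompleteNormedModule) _ 0 2 X)
    by apply (ex_RInt_id_weight a c Ha Hc).
  apply Rplus_le_compat; [| apply RInt_id_weight_tail_le; assumption].
  apply Rle_trans with (RInt (fun x => 2 * weight a c x) 0 2).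
  - apply RInt_le; [lra | apply ex_RInt_id_weight; assumption | |].
    + apply (ex_RInt_scal (V := R_CompleteNormedModule)), ex_RInt_weight; assumption.
    + intros x Hx. apply Rmult_le_compat_r; [apply weight_ge_0 | lra]; assumption.
  - rewrite RInt_Rscal, (RInt_weight a c s) by (try apply ex_RInt_weight; assumption || lra).
    apply Rmult_le_compat_l; [lra |].
    apply Rmult_le_compat_r; [left; apply Rinv_0_lt_compat; nra |].
    assert (H := atan_bound ((rpow 2 a - c) / s)). lra.
Qed.

Lemma sin_mul_PI_pos a (m : nat) : 2 * INR m < a < 2 * INR m + 1 -> 0 < sin (a * PI).
Proof.
  intros Ham. assert (HP := PI_RGT_0).
  replace (a * PI) with (PI * (a - 2 * INR m) + 2 * INR m * PI) by ring.
  rewrite sin_period. apply sin_gt_0; nra.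
Qed.

Lemma atan_cot_mul_PI a (m : nat) : 2 * INR m < a < 2 * INR m + 1 ->
  atan (cos (a * PI) / sin (a * PI)) = PI * (2 * INR m + 1 - a) - PI / 2.
Proof.
  intros Ham. assert (HP := PI_RGT_0).
  set (t := PI * (a - 2 * INR m)).
  assert (Ht : 0 < t < PI) by (unfold t; split; nra).
  replace (a * PI) with (t + 2 * INR m * PI) by (unfold t; ring).
  rewrite sin_period, cos_period.
  replace (cos t / sin t) with (tan (PI / 2 - t))
    by (unfold tan; rewrite sin_shift, cos_shift; reflexivity).
  rewrite atan_tan by lra. unfold t. lra.
Qed.

(* [cos (2 m PI / a) = - cos t] with [t = PI (a - 2m) / a], and [0 <= t <= PI (a - 2m) / 2]. *)
Lemma cos_2m_PI_div_le a (m : nat) : 2 * INR m < a < 2 * INR m + 1 -> 2 < a ->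
  cos (2 * INR m * PI / a) <= -1 + (a - 2 * INR m) ^ 2 * PI ^ 2 / 8.
Proof.
  intros Ham Ha. assert (HP := PI_RGT_0).
  set (t := PI * (a - 2 * INR m) / a).
  replace (2 * INR m * PI / a) with (PI - t) by (unfold t; field; lra).
  rewrite Rtrigo_facts.cos_pi_minus.
  assert (Ht0 : 0 <= t) by (apply Rle_mult_inv_pos; nra).
  assert (Ht1 : t <= PI * (a - 2 * INR m) / 2).
  { unfold t, Rdiv. apply Rmult_le_compat_l; [nra |]. apply Rinv_le_contravar; lra. }
  assert (H := cos_ge_1_sub_sqr_half t ltac:(split; nra)).
  assert (t ^ 2 <= (PI * (a - 2 * INR m) / 2) ^ 2) by (apply pow_incr; lra).
  nra.
Qed.

Section Scaled_weight.

Variables (a : R) (m : nat).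
Hypothesis Ham : 2 * INR m < a < 2 * INR m + 1.
Hypothesis Ha : 2 < a.

Let Hsin : 0 < sin (a * PI) := sin_mul_PI_pos a m Ham.

Let Hsin2 : sin (a * PI) ^ 2 + cos (a * PI) ^ 2 = 1.
Proof. rewrite <- !Rsqr_pow2. apply sin2_cos2. Qed.

Lemma scaled_RInt_weight_ge X : 2 <= X ->
  2 * INR m + 1 - a - / X ^ 2 <= a * sin (a * PI) / PI * RInt (weight a (cos (a * PI))) 0 X.
Proof.
  intros HX. assert (HP := PI_RGT_0). assert (HP3 := PI2_3_2).
  rewrite (RInt_weight a _ (sin (a * PI))), (atan_cot_mul_PI a m) by (assumption || lra).
  set (s := sin (a * PI)) in *. set (c := cos (a * PI)) in *.
  set (Y := (rpow X a - c) / s).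
  assert (Hs1 : s <= 1) by apply SIN_bound.
  assert (Hc1 : c <= 1) by apply COS_bound.
  assert (HXa := rpow_ge_sqr_mul_half a X Ha HX).
  assert (Hnum : X ^ 2 / 2 <= rpow X a - c) by nra.
  assert (HY : X ^ 2 / 2 <= Y).
  { apply Rle_trans with (rpow X a - c); [exact Hnum |]. unfold Y.
    apply Rmult_le_reg_r with s; [exact Hsin |].
    unfold Rdiv; rewrite Rmult_assoc, Rinv_l, Rmult_1_r by lra. nra. }
  assert (HinvY : / Y <= 2 / X ^ 2).
  { replace (2 / X ^ 2) with (/ (X ^ 2 / 2)) by (field; nra).
    apply Rinv_le_contravar; [nra | exact HY]. }
  assert (Hat := atan_ge_PI2_sub_inv Y ltac:(nra)).
  replace (a * s / PI * ((atan Y + (PI * (2 * INR m + 1 - a) - PI / 2)) / (a * s)))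
    with (2 * INR m + 1 - a + (atan Y - PI / 2) / PI) by (field; lra).
  enough (- / X ^ 2 <= (atan Y - PI / 2) / PI) by lra.
  apply Rmult_le_reg_r with PI; [exact HP |].
  replace ((atan Y - PI / 2) / PI * PI) with (atan Y - PI / 2) by (field; lra).
  assert (0 < / X ^ 2) by (apply Rinv_0_lt_compat; nra).
  replace (2 / X ^ 2) with (2 * / X ^ 2) in HinvY by (unfold Rdiv; ring).
  nra.
Qed.

Lemma scaled_RInt_id_weight_le X : 2 <= X ->
  a * sin (a * PI) / PI * RInt (fun x => x * weight a (cos (a * PI)) x) 0 X
  <= 2 * (2 * INR m + 1 - a) + 16 / 27.
Proof.
  intros HX. assert (HP := PI_RGT_0). assert (HP3 := PI2_3_2).
  set (s := sin (a * PI)) in *. set (c := cos (a * PI)) in *.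
  assert (Hs1 : s <= 1) by apply SIN_bound.
  eapply Rle_trans.
  { apply Rmult_le_compat_l; [apply Rlt_le, Rdiv_lt_0_compat; nra |].
    apply (RInt_id_weight_le a c s X); assumption. }
  unfold s, c. rewrite (atan_cot_mul_PI a m Ham). fold s.
  replace (a * s / PI
           * (2 * ((PI / 2 + (PI * (2 * INR m + 1 - a) - PI / 2)) / (a * s)) + 16 / (9 * a)))
    with (2 * (2 * INR m + 1 - a) + 16 * s / (9 * PI)) by (field; repeat split; lra).
  apply Rplus_le_compat_l.
  apply Rmult_le_reg_r with (9 * PI); [lra |].
  replace (16 * s / (9 * PI) * (9 * PI)) with (16 * s) by (field; lra). nra.
Qed.

End Scaled_weight.

Lemma sum_n_m_le_affine (t c : nat -> R) A B n :
  (forall j, t j <= 1 + A * c j + B) ->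
  sum_n_m t 1 n <= INR n + A * sum_n_m c 1 n + INR n * B.
Proof.
  intros Ht. induction n as [| n IH].
  - rewrite !sum_n_m_zero by lia. simpl. unfold zero; simpl. lra.
  - rewrite !sum_n_Sm by lia. rewrite S_INR. unfold plus; simpl.
    specialize (Ht (S n)). lra.
Qed.

Lemma sum_n_m_le_pred_add_last (c : nat -> R) n : (1 <= n)%nat -> (forall j, c j <= 1) ->
  sum_n_m c 1 n <= INR n - 1 + c n.
Proof.
  intros Hn Hc. destruct n as [| n]; [lia |].
  rewrite sum_n_Sm, S_INR by lia. unfold plus; simpl.
  enough (sum_n_m c 1 n <= INR n) by lra.
  apply Rle_trans with (sum_n_m (fun _ => 1) 1 n); [apply sum_n_m_le, Hc |].
  rewrite sum_n_m_const. replace (S n - 1)%nat with n by lia. lra.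
Qed.

Lemma rpow_1_plus_2_mul_le q l x : 0 <= q -> 0 < l -> 6 * (q + 1) * l <= 1 -> -1 <= x <= 1 ->
  rpow (1 + 2 * l * x + l ^ 2) q <= 1 + 2 * q * l * x + (q + 18 * q ^ 2) * l ^ 2.
Proof.
  intros Hq Hl Hsmall Hx.
  set (y := 2 * l * x + l ^ 2).
  assert (Hy : Rabs y <= 3 * l) by (apply Rabs_le; unfold y; split; nra).
  assert (Hqy : Rabs (q * y) <= 3 * q * l).
  { rewrite Rabs_mult, Rabs_pos_eq by exact Hq. nra. }
  replace (1 + 2 * l * x + l ^ 2) with (1 + y) by (unfold y; ring).
  eapply Rle_trans; [apply rpow_1_plus_le; [exact Hq | nra | nra] |].
  assert (Hsq : (q * y) ^ 2 <= 9 * q ^ 2 * l ^ 2).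
  { apply Rabs_le_between in Hqy.
    assert (0 <= (3 * q * l - q * y) * (3 * q * l + q * y)) by (apply Rmult_le_pos; lra).
    nra. }
  unfold y in *. nra.
Qed.

Lemma sum_rpow_1_plus_2_cos_le q l (theta : nat -> R) m :
  0 <= q -> 0 < l -> 6 * (q + 1) * l <= 1 -> (1 <= m)%nat ->
  sum_n_m (fun j => rpow (1 + 2 * l * cos (theta j) + l ^ 2) q) 1 m
  <= INR m + 2 * q * l * (INR m - 1 + cos (theta m)) + INR m * (q + 18 * q ^ 2) * l ^ 2.
Proof.
  intros Hq Hl Hsmall Hm.
  eapply Rle_trans.
  { apply (sum_n_m_le_affine _ (fun j => cos (theta j)) (2 * q * l) ((q + 18 * q ^ 2) * l ^ 2)).
    intros j. eapply Rle_trans; [apply rpow_1_plus_2_mul_le; auto; apply COS_bound |].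
    right; ring. }
  assert (Hlast := sum_n_m_le_pred_add_last (fun j => cos (theta j)) m Hm
                     (fun j => proj2 (COS_bound (theta j)))).
  assert (Hcoef : 0 <= 2 * q * l) by nra.
  assert (Hprod := Rmult_le_compat_l _ _ _ Hcoef Hlast). simpl in Hprod. lra.
Qed.

Lemma integral_term_ge a (m : nat) p lam :
  2 * INR m < a < 2 * INR m + 1 -> 2 < a -> 1 < p -> 0 < lam <= / 2 ->
  2 * INR m + 1 - a - lam ^ 2 - p * lam * (2 * (2 * INR m + 1 - a) + 16 / 27)
  <= a * sin (a * PI) / PI *
     RInt (fun t => rpow t (a - 1) * rpow (1 - lam * t) p
                    / (rpow t (2 * a) - 2 * rpow t a * cos (a * PI) + 1)) 0 (1 / lam).
Proof.
  intros Ham Ha Hp Hlam. assert (HP := PI_RGT_0).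
  assert (Hsin := sin_mul_PI_pos a m Ham).
  assert (Hcos : cos (a * PI) ^ 2 < 1).
  { assert (H := sin2_cos2 (a * PI)). rewrite !Rsqr_pow2 in H. nra. }
  assert (HX : 2 <= 1 / lam).
  { apply Rmult_le_reg_r with lam; [lra |]. unfold Rdiv. rewrite Rmult_1_l, Rinv_l; lra. }
  assert (HinvX : / (1 / lam) ^ 2 = lam ^ 2) by (field; lra).
  assert (HJ := scaled_RInt_weight_ge a m Ham Ha _ HX).
  assert (HK := scaled_RInt_id_weight_le a m Ham Ha _ HX).
  assert (HI := RInt_integrand_ge a (cos (a * PI)) Ha Hcos p lam Hp (proj1 Hlam)).
  set (A := a * sin (a * PI) / PI) in *.
  assert (HA : 0 < A) by (apply Rdiv_lt_0_compat; nra).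
  assert (Hpl : 0 <= p * lam) by nra.
  rewrite HinvX in HJ.
  apply Rmult_le_compat_l with (r := A) in HI; [| lra].
  apply Rmult_le_compat_l with (r := p * lam) in HK; [| exact Hpl].
  lra.
Qed.

Lemma L_fun_le alpha (m k : nat) lam :
  2 * INR m < alpha < 2 * INR m + 1 -> 2 < alpha -> (1 <= k)%nat ->
  0 < lam -> 6 * (alpha * INR k / 2 + 1) * lam <= 1 ->
  L_fun alpha m k lam <=
    - (alpha * INR k) * lam / 3
    + (2 * INR m * (alpha * INR k / 2 + 18 * (alpha * INR k / 2) ^ 2)
       + (alpha - 1) * (alpha * INR k) + 1) * lam ^ 2.
Proof.
  intros Ham Ha Hk Hlam Hsmall.
  assert (Hm : (1 <= m)%nat) by (destruct m; [simpl in Ham; lra | lia]).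
  assert (Hk1 : 1 <= INR k) by (apply (le_INR 1); exact Hk).
  assert (Hp : 2 < alpha * INR k) by nra.
  assert (Hlam2 : lam <= / 2) by nra.
  assert (HS := sum_rpow_1_plus_2_cos_le (alpha * INR k / 2) lam
                  (fun j => 2 * INR j * PI / alpha) m ltac:(lra) Hlam Hsmall Hm).
  assert (HP := rpow_1_plus_ge (alpha * INR k) lam ltac:(lra) ltac:(lra)).
  apply Rmult_le_compat_neg_l with (r := 1 - alpha) in HP; [| lra].
  assert (HI := integral_term_ge alpha m (alpha * INR k) lam Ham Ha ltac:(lra) ltac:(lra)).
  assert (Hcoef : 1 - 3 * (alpha - 2 * INR m) + 2 * cos (2 * INR m * PI / alpha) + 16 / 27
                  <= - 1 / 3).
  { assert (Hgam := cos_2m_PI_div_le alpha m Ham Ha).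
    assert (HPI := PI_le_10_3). assert (HP0 := PI_RGT_0).
    assert (PI ^ 2 <= 100 / 9) by nra.
    assert ((alpha - 2 * INR m) ^ 2 * PI ^ 2 <= (alpha - 2 * INR m) ^ 2 * (100 / 9))
      by (apply Rmult_le_compat_l; [apply pow2_ge_0 | assumption]).
    nra. }
  apply Rmult_le_compat_l with (r := alpha * INR k * lam) in Hcoef; [| nra].
  unfold L_fun. cbv beta in HS. lra.
Qed.

Lemma Int_part_even_bounds alpha (m : nat) :
  (forall n : nat, alpha <> INR n) -> IZR (Int_part alpha) = INR (2 * m) ->
  2 * INR m < alpha < 2 * INR m + 1.
Proof.
  intros Hnotnat Hfloor.
  assert (Hb := base_Int_part alpha). rewrite Hfloor, mult_INR in Hb.
  assert (Hne := Hnotnat (2 * m)%nat). rewrite mult_INR in Hne.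
  simpl INR in Hb, Hne. replace (1 + 1) with 2 in Hb, Hne by ring.
  destruct Hb as [[Hlt | Heq] Hb2]; [lra | congruence].
Qed.

Theorem lemma6p5 (alpha : R) (m k : nat)
  (Halpha : 2 < alpha)
  (Hnotnat : forall n : nat, alpha <> INR n)
  (Hfloor : IZR (Int_part alpha) = INR (2 * m))
  (Hk : (1 <= k)%nat) :
  exists lam0 : R, 0 < lam0 /\
    forall lam : R, 0 < lam < lam0 -> L_fun alpha m k lam < 0.
Proof.
  assert (Ham := Int_part_even_bounds alpha m Hnotnat Hfloor).
  assert (Hk1 : 1 <= INR k) by (apply (le_INR 1); exact Hk).
  assert (Hm0 : 0 <= INR m) by apply pos_INR.
  set (p := alpha * INR k).
  set (q := p / 2).
  set (C := 2 * INR m * (q + 18 * q ^ 2) + (alpha - 1) * p + 1).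
  assert (Hp : 0 < p) by (unfold p; nra).
  assert (Hq : 0 < q) by (unfold q; lra).
  assert (HC : 0 < C) by (unfold C; nra).
  exists (Rmin (1 / (6 * (q + 1))) (p / (3 * C))). split.
  { apply Rmin_glb_lt; apply Rdiv_lt_0_compat; lra. }
  intros lam [Hlam Hlam0].
  assert (Hsmall : lam <= 1 / (6 * (q + 1)))
    by (left; eapply Rlt_le_trans; [exact Hlam0 | apply Rmin_l]).
  assert (Hquad : lam < p / (3 * C)) by (eapply Rlt_le_trans; [exact Hlam0 | apply Rmin_r]).
  apply Rle_lt_trans with (- p * lam / 3 + C * lam ^ 2).
  - apply L_fun_le; try assumption.
    change (alpha * INR k / 2) with q.
    apply Rmult_le_compat_l with (r := 6 * (q + 1)) in Hsmall; [| lra].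
    replace (6 * (q + 1) * (1 / (6 * (q + 1)))) with 1 in Hsmall by (field; lra). lra.
  - apply Rmult_lt_compat_r with (r := 3 * C) in Hquad; [| lra].
    replace (p / (3 * C) * (3 * C)) with p in Hquad by (field; lra). nra.
Qed.
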